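(* Let $d>2$ be a prime integer, let $\mathcal{H}$ be a $d$-dimensional Hilbert space with orthonormal computational basis $\{|0\rangle,|1\rangle,\dots,|d-1\rangle\}$, and let $w=e^{2\pi i/d}$. Define the Chrestenson operator $$C_d=\frac{1}{\sqrt{d}}\sum_{x,y=0}^{d-1} w^{xy}\,|y\rangle\langle x|,$$ for $n,m\in\{0,1,\dots,d-1\}$ the Weyl operators $$U_{nm}=\sum_{k=0}^{d-1} w^{kn}\,|k\rangle\langle (k+m)\bmod d|,$$ and for $a,b\in\{0,1,\dots,d-1\}$ the Kronecker-Pauli operators $$\Pi_{ab}=\sum_{k=0}^{d-1} w^{(k-a)b}\,|k\rangle\langle (-k+2a)\bmod d|.$$ Then for every $n,m\in\{0,1,\dots,d-1\}$ there exist an integer $k\in\{0,1,\dots,d-1\}$ and a Kronecker-Pauli operator $\Pi$ from the family $\{\Pi_{ab} : a,b\in\{0,1,\dots,d-1\}\}$ (a family of $d^2$ operators) such that $$C_d\,U_{nm}\,C_d = w^{k}\,\Pi.$$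
   Context: Here $|j\rangle\langle j'|$ denotes the rank-one operator $v\mapsto \langle j',v\rangle |j\rangle$ on $\mathcal{H}$, and $x\bmod d$ denotes the representative of $x$ in $\{0,1,\dots,d-1\}$. In the paper the $d^2$ Kronecker-Pauli operators are enumerated as $\Pi_\ell$, $\ell\in\{1,\dots,d^2\}$; the statement above quantifies over this same family. *)

(* operators on the d-dimensional Hilbert space C^d are d x d
   matrices over algC (algebraic complex numbers), in the computational basis.
   The rank-one operator |j><j'| is the matrix unit with a 1 at entry (j, j'). *)
From mathcomp Require Import all_boot all_order all_algebra all_field.
Set Implicit Arguments. Unset Strict Implicit. Unset Printing Implicit Defensive.
Import Order.TTheory GRing.Theory Num.Theory.
Local Open Scope ring_scope.

(* w = e^{2 pi i / d}: d.-root (-1) is e^{i pi / d} (minimal nonnegative argument). *)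
Definition omega (d : nat) : algC := (d.-root (-1)) ^+ 2.

Definition chrestenson (d : nat) : 'M[algC]_d :=
  \matrix_(y < d, x < d) ((sqrtC d%:R)^-1 * omega d ^+ (x * y)).

Definition weyl (d n m : nat) : 'M[algC]_d :=
  \matrix_(k < d, j < d)
    (if (j : nat) == ((k + m) %% d)%N then omega d ^+ (k * n) else 0).

Definition kpauli (d a b : nat) : 'M[algC]_d :=
  \matrix_(k < d, j < d)
    (if (j : int) == ((- (k : int) + 2 * (a : int)) %% (d : int))%Z
     then omega d ^ (((k : int) - (a : int)) * (b : int))
     else 0).

From mathcomp Require Import all_boot all_order all_algebra all_field.
From mathcomp Require Import ring.

Set Implicit Arguments.
Unset Strict Implicit.
Unset Printing Implicit Defensive.

Import Order.TTheory GRing.Theory Num.Theory.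
Local Open Scope ring_scope.

(* Index the computational basis by the field F_d and let e(x) = w^x, an
   additive character of F_d.  Then (C_d)_{yx} = e(xy)/sqrt d and U_{nm} has the
   single nonzero entry e(kn) in row k, column k + m, so
   (C_d U_{nm} C_d)_{yz} = d^-1 sum_x e((x - m)(y + n) + z x), which by the
   orthogonality of characters is e(-m(y + n)) when y + n + z = 0 and 0
   otherwise.  Since d is odd, a = -n/2 exists in F_d, and this matrix is
   e(-m(n + a)) Pi_{a,-m}. *)

Lemma prime_unity_root_prim (R : nzRingType) (p : nat) (z : R) :
  prime p -> z ^+ p = 1 -> z != 1 -> p.-primitive_root z.
Proof.
move=> p_pr zp1 z_neq1.
have [q q_prim q_dvd_p] := prim_order_exists (prime_gt0 p_pr) zp1.
have [_ /(_ q q_dvd_p) /orP[/eqP q1|/eqP <-//]] := primeP p_pr.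
by move: (prim_expr_order q_prim); rewrite q1 expr1 => /eqP; rewrite (negbTE z_neq1).
Qed.

Lemma omega_expr_order (d : nat) : (0 < d)%N -> omega d ^+ d = 1.
Proof. by move=> d_gt0; rewrite -exprM mulnC exprM rootCK // sqrrN expr1n. Qed.

Lemma omega_neq1 (d : nat) : (1 < d)%N -> omega d != 1.
Proof.
move=> d_gt1; have d_gt0 := ltnW d_gt1.
rewrite /omega sqrf_eq1 negb_or; apply/andP; split; apply/eqP => r_eq.
  have := rootCK d_gt0 (-1 : algC); rewrite /= r_eq expr1n => /eqP.
  by rewrite -addr_eq0 -mulr2n pnatr_eq0.
by have := rootC_lt0 (-1 : algC) d_gt1; rewrite r_eq ltrN10.
Qed.

Lemma omega_prim (d : nat) : prime d -> d.-primitive_root (omega d).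
Proof.
move=> d_pr; apply: prime_unity_root_prim => //.
  exact/omega_expr_order/prime_gt0.
exact/omega_neq1/prime_gt1.
Qed.

Section FpOrdinal.

Variables (p : nat) (p_pr : prime p).

Definition Fp_ord (x : 'F_p) : 'I_p := cast_ord (Fp_cast p_pr) x.

Lemma Fp_ordK (x : 'F_p) : (Fp_ord x : nat)%:R = x.
Proof. exact: natr_Zp. Qed.

Lemma Fp_ord_natr (i : 'I_p) : Fp_ord (i : nat)%:R = i.
Proof. by apply: val_inj; rewrite /= val_Fp_nat // modn_small. Qed.

Lemma eq_ord_Fp (i : 'I_p) (t : nat) :
  ((i : nat) == t %% p)%N = ((i : nat)%:R == t%:R :> 'F_p).
Proof.
rewrite -[RHS](inj_eq (can_inj Fp_ordK)) Fp_ord_natr.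
have val_t : (Fp_ord t%:R : nat) = (t %% p)%N by rewrite /= val_Fp_nat.
by rewrite -val_t.
Qed.

Lemma eq_ord_Fp_int (i : 'I_p) (r : int) :
  ((i : int) == r %% p)%Z = ((i : nat)%:R == r%:~R :> 'F_p).
Proof.
have p_neq0 : (p : int) != 0 by rewrite eqz_nat -lt0n prime_gt0.
have [t r_mod] : exists t : nat, (r %% p)%Z = t.
  by exists `|(r %% p)%Z|%N; rewrite gez0_abs ?modz_ge0.
have -> : r%:~R = t%:R :> 'F_p.
  by rewrite {1}(divz_eq r p) intrD intrM r_mod -!pmulrn pchar_Fp_0 // mulr0 add0r.
have t_lt_p : (t < p)%N by rewrite -ltz_nat -r_mod ltz_pmod // ltz_nat prime_gt0.
by rewrite r_mod eqz_nat -eq_ord_Fp modn_small.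
Qed.

Lemma sum_ord_Fp (V : nmodType) (G : 'F_p -> V) :
  \sum_(i < p) G (i : nat)%:R = \sum_(x : 'F_p) G x.
Proof.
rewrite (reindex Fp_ord) /=; first by apply: eq_bigr => x _; rewrite Fp_ordK.
by exists (fun i : 'I_p => (i : nat)%:R) => [x _|i _]; rewrite ?Fp_ordK ?Fp_ord_natr.
Qed.

Lemma Fp_two_neq0 : (2 < p)%N -> (2 : 'F_p) != 0.
Proof.
move=> p_gt2; rewrite -val_eqE /= Fp_cast // !(@modn_small 1) ?prime_gt1 //.
by rewrite modn_small.
Qed.

End FpOrdinal.

Section FpCharacter.

Variables (R : idomainType) (p : nat) (p_pr : prime p) (z : R).
Hypothesis z_prim : p.-primitive_root z.

Definition expFp (x : 'F_p) : R := z ^+ x.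

Lemma expFp_nat (t : nat) : expFp t%:R = z ^+ t.
Proof. by rewrite /expFp val_Fp_nat // prim_expr_mod. Qed.

Lemma expFp0 : expFp 0 = 1.
Proof. exact: expr0. Qed.

Lemma expFpD (x y : 'F_p) : expFp (x + y) = expFp x * expFp y.
Proof. by rewrite -(Fp_ordK p_pr x) -(Fp_ordK p_pr y) -natrD !expFp_nat exprD. Qed.

Lemma expFpN (x : 'F_p) : expFp (- x) = (expFp x)^-1.
Proof. by apply/esym/mulr1_eq; rewrite -expFpD subrr expFp0. Qed.

Lemma expFp_int (r : int) : z ^ r = expFp r%:~R.
Proof.
case: r => t; first by rewrite -pmulrn expFp_nat.
by rewrite NegzE -exprnN -expFp_nat -expFpN intrN.
Qed.

Lemma sum_expFp_mul (y : 'F_p) :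
  \sum_(x : 'F_p) expFp (x * y) = if y == 0 then p%:R else 0.
Proof.
have [->|y_neq0] := eqVneq y 0.
  by under eq_bigr do rewrite mulr0 expFp0; rewrite sumr_const card_Fp.
have -> : \sum_(x : 'F_p) expFp (x * y) = \sum_(x : 'F_p) expFp x.
  by rewrite [RHS](reindex_inj (mulIf y_neq0)).
rewrite -(sum_ord_Fp p_pr expFp).
under eq_bigr do rewrite expFp_nat.
have := subrX1 z p; rewrite prim_expr_order // subrr => /esym/eqP.
rewrite mulf_eq0 subr_eq0 => /orP[z1|/eqP //].
by move: (prim_order_dvd z_prim 1); rewrite expr1 z1 dvdn1 => /eqP p1; move: p_pr; rewrite p1.
Qed.

End FpCharacter.

Section ChrestensonWeyl.

Variables (d : nat) (d_pr : prime d).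

Local Notation w := (omega d).
Local Notation e := (expFp w).
Local Notation "i %:F" := ((nat_of_ord i)%:R : 'F_d).
Local Notation C := (chrestenson d).

Let w_prim : d.-primitive_root w := omega_prim d_pr.
Let s : algC := (sqrtC d%:R)^-1.

Lemma normalization_sqr : s * s * d%:R = 1.
Proof. by rewrite /s -expr2 exprVn sqrtCK mulVf // pnatr_eq0 -lt0n prime_gt0. Qed.

Lemma chrestenson_entry (y x : 'I_d) : C y x = s * e (x%:F * y%:F).
Proof. by rewrite mxE -natrM expFp_nat. Qed.

Lemma weyl_entry (n m k j : 'I_d) :
  weyl d n m k j = if j%:F == k%:F + m%:F then e (k%:F * n%:F) else 0.
Proof. by rewrite mxE eq_ord_Fp // natrD -natrM expFp_nat. Qed.

Lemma kpauli_entry (a b k j : 'I_d) :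
  kpauli d a b k j =
  if j%:F == 2 * a%:F - k%:F then e ((k%:F - a%:F) * b%:F) else 0.
Proof.
rewrite mxE eq_ord_Fp_int // (expFp_int d_pr w_prim).
by rewrite !(intrD, intrN, intrM) -!pmulrn addrC.
Qed.

Lemma chrestenson_weyl_entry (n m y j : 'I_d) :
  (C *m weyl d n m) y j = s * e ((j%:F - m%:F) * (y%:F + n%:F)).
Proof.
rewrite mxE; under eq_bigr do rewrite chrestenson_entry weyl_entry.
rewrite (sum_ord_Fp d_pr (fun x => s * e (x * y%:F) *
  (if j%:F == x + m%:F then e (x * n%:F) else 0))).
rewrite (bigD1 (j%:F - m%:F)) //= subrK eqxx big1 ?addr0.
  by rewrite -mulrA -expFpD // mulrDr.
move=> x x_neq; case: eqP => [j_eq|_]; last by rewrite mulr0.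
by move: x_neq; rewrite j_eq addrK eqxx.
Qed.

Lemma chrestenson_weyl_chrestenson_entry (n m y z : 'I_d) :
  (C *m weyl d n m *m C) y z =
  if y%:F + n%:F + z%:F == 0 then e (- (m%:F * (y%:F + n%:F))) else 0.
Proof.
rewrite mxE; under eq_bigr do rewrite chrestenson_weyl_entry chrestenson_entry.
rewrite (sum_ord_Fp d_pr (fun x => s * e ((x - m%:F) * (y%:F + n%:F)) * (s * e (z%:F * x)))).
have -> : \sum_(x : 'F_d) s * e ((x - m%:F) * (y%:F + n%:F)) * (s * e (z%:F * x)) =
    s * s * e (- (m%:F * (y%:F + n%:F))) * \sum_(x : 'F_d) e (x * (y%:F + n%:F + z%:F)).
  rewrite mulr_sumr; apply: eq_bigr => x _.
  by rewrite mulrACA -expFpD // -[RHS]mulrA -expFpD //; congr (_ * e _); ring.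
rewrite sum_expFp_mul //; case: ifP => _; last by rewrite mulr0.
by rewrite mulrAC normalization_sqr mul1r.
Qed.

Lemma chrestenson_weyl_chrestenson (n m : 'I_d) (a : 'F_d) :
  2 * a = - n%:F ->
  C *m weyl d n m *m C =
  e (- (m%:F * (n%:F + a))) *: kpauli d (Fp_ord d_pr a) (Fp_ord d_pr (- m%:F)).
Proof.
move=> two_a; apply/matrixP => y z.
rewrite chrestenson_weyl_chrestenson_entry mxE kpauli_entry !Fp_ordK.
have -> : (z%:F == 2 * a - y%:F) = (y%:F + n%:F + z%:F == 0).
  by rewrite two_a -opprD -addr_eq0 addrC [n%:F + _]addrC.
case: ifP => _; last by rewrite mulr0.
by rewrite -expFpD //; congr e; ring.
Qed.

End ChrestensonWeyl.

Theorem mainTheorem1 (d : nat) (hd : prime d) (hd2 : (2 < d)%N) :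
  forall n m : 'I_d,
  exists (k : 'I_d) (a b : 'I_d),
    chrestenson d *m weyl d n m *m chrestenson d = (omega d ^+ k) *: kpauli d a b.
Proof.
move=> n m.
pose a : 'F_d := - (n : nat)%:R / 2.
exists (Fp_ord hd (- ((m : nat)%:R * ((n : nat)%:R + a)))), (Fp_ord hd a),
  (Fp_ord hd (- (m : nat)%:R)).
by apply: chrestenson_weyl_chrestenson; rewrite mulrC divfK // Fp_two_neq0.
Qed.
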